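(* Let $k\ge 2$. If $G$ is a finite simple graph admitting a closed neighborhood balanced $k$-coloring and $H$ is a finite simple graph admitting a neighborhood-balanced $k$-coloring, then the Cartesian product $G\,\square\,H$ admits a closed neighborhood balanced $k$-coloring.
   Context: For a vertex $v$, $N(v)=\{u: uv\in E\}$ and $N[v]=N(v)\cup\{v\}$. A neighborhood-balanced $k$-coloring of a graph is a map $c:V\to\{1,\dots,k\}$ such that for every vertex $v$ the numbers $|\{u\in N(v): c(u)=i\}|$, $i=1,\dots,k$, are all equal; a closed neighborhood balanced $k$-coloring is defined likewise with $N[v]$ in place of $N(v)$. The Cartesian product $G\,\square\,H$ has vertex set $V(G)\times V(H)$, with $(g,h)$ adjacent to $(g',h')$ iff ($g=g'$ and $hh'\in E(H)$) or ($h=h'$ and $gg'\in E(G)$). *)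

From mathcomp Require Import all_boot.
Set Implicit Arguments. Unset Strict Implicit. Unset Printing Implicit Defensive.

Definition simple_graph (T : finType) (e : rel T) : Prop :=
  symmetric e /\ irreflexive e.

Definition nbhd (T : finType) (e : rel T) (v : T) : {set T} := [set u | e v u].
Definition cnbhd (T : finType) (e : rel T) (v : T) : {set T} := v |: nbhd e v.

(* neighborhood-balanced k-coloring: c : T -> 'I_k (colors 1..k as 0..k-1),
   every color appears equally often in every N(v). *)
Definition nb_coloring (k : nat) (T : finType) (e : rel T) (c : T -> 'I_k) : Prop :=
  forall (v : T) (i j : 'I_k),
    #|[set u in nbhd e v | c u == i]| = #|[set u in nbhd e v | c u == j]|.

Definition cnb_coloring (k : nat) (T : finType) (e : rel T) (c : T -> 'I_k) : Prop :=
  forall (v : T) (i j : 'I_k),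
    #|[set u in cnbhd e v | c u == i]| = #|[set u in cnbhd e v | c u == j]|.

Definition cart_prod (T1 T2 : finType) (e1 : rel T1) (e2 : rel T2) : rel (T1 * T2) :=
  fun x y => ((x.1 == y.1) && e2 x.2 y.2) || ((x.2 == y.2) && e1 x.1 y.1).

(* Colour (g, h) by c1 g + c2 h in Z_k.  The closed neighbourhood of (g, h)
   in G □ H is the disjoint union of N_G[g] × {h} and {g} × N_H(h), and the
   vertices of colour i there are those x ∈ N_G[g] with c1 x = i - c2 h
   together with those y ∈ N_H(h) with c2 y = i - c1 g.  Both counts are
   independent of i, since c1 is closed-balanced and c2 is open-balanced. *)
From mathcomp Require Import all_boot ssralg zmodp.
Import GRing.Theory.

Set Implicit Arguments. Unset Strict Implicit. Unset Printing Implicit Defensive.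

Lemma card_setX_lines (T1 T2 : finType) (A : {set T1}) (B : {set T2})
    (g : T1) (h : T2) :
  h \notin B -> #|setX A [set h] :|: setX [set g] B| = #|A| + #|B|.
Proof.
move=> hNB; rewrite cardsU !cardsX !cards1 muln1 mul1n.
suff -> : setX A [set h] :&: setX [set g] B = set0 by rewrite cards0 subn0.
apply/setP => -[x y]; rewrite !inE /=.
by have [-> | _] := eqVneq y h; rewrite ?(negbTE hNB) !andbF.
Qed.

Section CartesianProduct.

Variables (T1 T2 : finType) (e1 : rel T1) (e2 : rel T2).

Lemma cnbhd_cart_prod (g : T1) (h : T2) :
  cnbhd (cart_prod e1 e2) (g, h) =
  setX (cnbhd e1 g) [set h] :|: setX [set g] (nbhd e2 h).
Proof.
apply/setP => -[x y]; rewrite !(inE, in_setX) /cart_prod /= xpair_eqE.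
have [-> | _] := eqVneq x g; have [-> | _] := eqVneq y h;
  by rewrite ?orbF ?andbT ?andbF.
Qed.

Variables (V : zmodType) (c1 : T1 -> V) (c2 : T2 -> V).

Definition sum_coloring (u : T1 * T2) : V := (c1 u.1 + c2 u.2)%R.

Lemma card_sum_coloring_cnbhd (g : T1) (h : T2) (i : V) : ~~ e2 h h ->
  #|[set u in cnbhd (cart_prod e1 e2) (g, h) | sum_coloring u == i]| =
  #|[set x in cnbhd e1 g | c1 x == (i - c2 h)%R]|
  + #|[set y in nbhd e2 h | c2 y == (i - c1 g)%R]|.
Proof.
move=> e2hh; rewrite -(card_setX_lines _ g (h := h)); last first.
  by rewrite !inE (negbTE e2hh).
have addr_eq (a b : V) : (a + b == i)%R = (a == i - b)%R.
  by rewrite [_ == (i - b)%R]eq_sym subr_eq eq_sym.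
apply: eq_card => -[x y].
rewrite cnbhd_cart_prod !(inE, in_setX) /sum_coloring /=.
have [-> | _] := eqVneq x g; have [-> | _] := eqVneq y h;
  rewrite ?(negbTE e2hh) ?andbT ?andbF ?orbF /=;
  [exact: addr_eq | by rewrite addrC addr_eq | by rewrite addr_eq | by []].
Qed.

End CartesianProduct.

Theorem theorem2p25 (k : nat) (T1 T2 : finType) (e1 : rel T1) (e2 : rel T2) :
  2 <= k ->
  simple_graph e1 -> simple_graph e2 ->
  (exists c1 : T1 -> 'I_k, cnb_coloring e1 c1) ->
  (exists c2 : T2 -> 'I_k, nb_coloring e2 c2) ->
  exists c : T1 * T2 -> 'I_k, cnb_coloring (cart_prod e1 e2) c.
Proof.
case: k => [// | n] _ _ [_ e2_irr] [c1 c1_bal] [c2 c2_bal].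
exists (sum_coloring c1 c2) => -[g h] i j.
rewrite !card_sum_coloring_cnbhd ?e2_irr //.
by congr addn; [apply: c1_bal | apply: c2_bal].
Qed.
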